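(* Let $G=(N,S,(u_i)_{i\in N})$ be a game with solution set $D\subseteq S$, let $m\ge1$, $\beta\ge1$ and $\alpha_1,\dots,\alpha_{m-1}\ge1$. If the utility of every player is $\beta$ varied over $D$ and, for each $i=1,\dots,m-1$, $\alpha_i$-lower dependent on the transition degree over $D$ at transition degree $i$, then $$m\text{-}\mathrm{PoTA}\ge \mathrm{PoA}\Big/\Big(\big(\textstyle\prod_{i=1}^{m-1}\alpha_i\big)\beta\Big).$$ If the utility of every player is $\beta$ varied over $D$ and, for each $i=1,\dots,m-1$, $\alpha_i$-upper dependent on the transition degree over $D$ at transition degree $i$, then $$m\text{-}\mathrm{PoTS}\le \big(\textstyle\prod_{i=1}^{m-1}\alpha_i\big)\beta\,\mathrm{PoS}.$$
   Context: For $m\ge1$, $T(D,m)$ is the set of profiles $t$ for which there is a set of at most $m$ solutions $D'\subseteq D$ such that for every player $j$ there is $d\in D'$ with $t_j=d_j$ (so $T(D,1)=D$). $\mathrm{sw}(s)=\sum_ju_j(s)$, assumed to have positive maximum over $S$; minima/maxima are read as infima/suprema if not attained. $\mathrm{PoA}=\min_D\mathrm{sw}/\max_S\mathrm{sw}$, $\mathrm{PoS}=\max_D\mathrm{sw}/\max_S\mathrm{sw}$, $m\text{-}\mathrm{PoTA}=\min_{T(D,m)}\mathrm{sw}/\max_S\mathrm{sw}$, $m\text{-}\mathrm{PoTS}=\max_{T(D,m)}\mathrm{sw}/\max_S\mathrm{sw}$. Player $j$'s utility over $A$ at transition degree $i$ is $\alpha$-lower dependent on the transition degree if $\min_{s\in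 T(A,i+1)}u_j(s)\ge\min_{t\in T(A,i)}u_j(t)/\alpha$, and $\alpha$-upper dependent on the transition degree if $\max_{s\in T(A,i+1)}u_j(s)\le\alpha\max_{t\in T(A,i)}u_j(t)$. Player $j$'s utility is $\beta$ varied over $A$ if for all $s,t\in A$, $\mathrm{sw}(s)\ge\mathrm{sw}(t)\Rightarrow u_j(s)\ge u_j(t)/\beta$. *)

From Stdlib Require Lists.List.
From HB Require Import structures.
From mathcomp Require Import all_boot all_order all_algebra.
From mathcomp Require Import all_classical all_reals ereal.
Set Implicit Arguments. Unset Strict Implicit. Unset Printing Implicit Defensive.
Import Order.TTheory GRing.Theory Num.Theory.
Local Open Scope classical_set_scope.
Local Open Scope ring_scope.

Section Game.
Variables (R : realType) (N : finType) (A : N -> Type).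

Definition profile := forall j : N, A j.

Definition sw (u : N -> profile -> R) (s : profile) : R := \sum_(j : N) u j s.

Definition transition (D : set profile) (m : nat) : set profile :=
  [set t | exists D' : seq profile,
      (size D' <= m)%N /\ (forall d, Stdlib.Lists.List.In d D' -> D d) /\
      (forall j : N, exists d, Stdlib.Lists.List.In d D' /\ t j = d j)].

Definition einf (X : set profile) (f : profile -> R) : \bar R :=
  ereal_inf [set (f s)%:E | s in X].
Definition esup (X : set profile) (f : profile -> R) : \bar R :=
  ereal_sup [set (f s)%:E | s in X].

(* optimum: max_S sw (a supremum if not attained) *)
Definition opt (u : N -> profile -> R) : \bar R := esup setT (sw u).

Definition ratio (u : N -> profile -> R) (x : \bar R) : \bar R :=
  (x * ((fine (opt u))^-1)%:E)%E.

Definition PoA (u : N -> profile -> R) (D : set profile) : \bar R :=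
  ratio u (einf D (sw u)).
Definition PoS (u : N -> profile -> R) (D : set profile) : \bar R :=
  ratio u (esup D (sw u)).
Definition PoTA (u : N -> profile -> R) (D : set profile) (m : nat) : \bar R :=
  ratio u (einf (transition D m) (sw u)).
Definition PoTS (u : N -> profile -> R) (D : set profile) (m : nat) : \bar R :=
  ratio u (esup (transition D m) (sw u)).

Definition lower_dependent (X : set profile) (uj : profile -> R) (i : nat) (alpha : R) :=
  (einf (transition X i.+1) uj >= einf (transition X i) uj * (alpha^-1)%:E)%E.

Definition upper_dependent (X : set profile) (uj : profile -> R) (i : nat) (alpha : R) :=
  (esup (transition X i.+1) uj <= alpha%:E * esup (transition X i) uj)%E.

Definition varied (u : N -> profile -> R) (X : set profile) (uj : profile -> R) (beta : R) :=
  forall s t, X s -> X t -> sw u s >= sw u t -> uj s >= uj t / beta.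

End Game.

From HB Require Import structures.
From mathcomp Require Import all_boot all_order all_algebra.
From mathcomp Require Import all_classical all_reals ereal.
Import Order.TTheory GRing.Theory Num.Theory.
Set Implicit Arguments.
Unset Strict Implicit.

Local Open Scope classical_set_scope.
Local Open Scope ring_scope.

(* Along the chain T(D,1) = D, T(D,2), ..., T(D,m) the extremal utility of each
   player moves by at most the factor alpha_i per step, so by the product of
   the alpha_i in total.  Beta variation compares the sum over the players of
   their extremal utilities on D with the extremal welfare on D: for a family
   (d_j) of solutions, each u_j(d_j) is at least u_j(d_i) / beta, where d_i
   has the least welfare, hence sum_j u_j(d_j) >= sw(d_i) / beta; dually for
   the maximum.  Chaining both comparisons bounds sw on T(D,m). *)

Section ErealChains.
Variable R : realType.
Local Open Scope ereal_scope.

Lemma ereal_chain_ge (x : nat -> \bar R) (c : nat -> R) (k : nat) : (0 < k)%N ->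
  (forall i, (1 <= i < k)%N -> (0 <= c i)%R) ->
  (forall i, (1 <= i < k)%N -> x i * (c i)%:E <= x i.+1) ->
  x 1%N * (\prod_(1 <= i < k) c i)%:E <= x k.
Proof.
elim: k => [//|[|k] IH] _ c_ge0 x_step; first by rewrite big_geq // mule1.
rewrite big_nat_recr //= EFinM muleA.
have k1 : (1 <= k.+1 < k.+2)%N by rewrite ltnSn.
apply: le_trans (x_step _ k1).
apply: lee_wpmul2r; first exact: c_ge0 k1.
by apply: IH => // i /andP[i1 ik]; [apply: c_ge0 | apply: x_step];
  rewrite i1 ltnS ltnW.
Qed.

Lemma ereal_chain_le (x : nat -> \bar R) (c : nat -> R) (k : nat) : (0 < k)%N ->
  (forall i, (1 <= i < k)%N -> (0 <= c i)%R) ->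
  (forall i, (1 <= i < k)%N -> x i.+1 <= (c i)%:E * x i) ->
  x k <= (\prod_(1 <= i < k) c i)%:E * x 1%N.
Proof.
elim: k => [//|[|k] IH] _ c_ge0 x_step; first by rewrite big_geq // mul1e.
rewrite big_nat_recr //= mulrC EFinM -muleA.
have k1 : (1 <= k.+1 < k.+2)%N by rewrite ltnSn.
apply: le_trans (x_step _ k1) _.
apply: lee_wpmul2l; first exact: c_ge0 k1.
by apply: IH => // i /andP[i1 ik]; [apply: c_ge0 | apply: x_step];
  rewrite i1 ltnS ltnW.
Qed.

End ErealChains.

Section Game.
Variables (R : realType) (N : finType) (A : N -> Type).
Local Notation profile := (profile A).
Local Open Scope ereal_scope.

Lemma einf_lbound (X : set profile) (f : profile -> R) s :
  X s -> einf X f <= (f s)%:E.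
Proof. by move=> Xs; apply: ereal_inf_lbound; exists s. Qed.

Lemma lb_einf (X : set profile) (f : profile -> R) x :
  (forall s, X s -> x <= (f s)%:E) -> x <= einf X f.
Proof. by move=> lb; apply/ereal_infP => _ [s Xs <-]; apply: lb. Qed.

Lemma esup_ubound (X : set profile) (f : profile -> R) s :
  X s -> (f s)%:E <= esup X f.
Proof. by move=> Xs; apply: ereal_sup_ubound; exists s. Qed.

Lemma ub_esup (X : set profile) (f : profile -> R) x :
  (forall s, X s -> (f s)%:E <= x) -> esup X f <= x.
Proof. by move=> ub; apply/ereal_supP => _ [s Xs <-]; apply: ub. Qed.

Lemma einf_lt (X : set profile) (f : profile -> R) r :
  einf X f < r%:E -> exists2 s, X s & (f s < r)%R.
Proof. by move=> /ereal_inf_lt[_ [s Xs <-]]; rewrite lte_fin; exists s. Qed.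

Lemma einfN (X : set profile) (f : profile -> R) :
  einf X (fun s => - f s)%R = - esup X f.
Proof.
rewrite /einf /esup /ereal_inf image_comp; congr (- ereal_sup _).
by apply: eq_imagel => s _ /=; rewrite opprK.
Qed.

Lemma transition1 (j0 : N) (D : set profile) : transition D 1 = D.
Proof.
apply/seteqP; split => [t [[|d [|? ?]] [//= _ [Dd dt]]] | d Dd].
- by case: (dt j0) => ? [].
- suff -> : t = d by apply: Dd; left.
  by apply: functional_extensionality_dep => j; have [? [[<-|[]] ->]] := dt j.
- exists [:: d]; split => //; split => [? [<-|[]] // | j].
  by exists d; split; first left.
Qed.

Lemma einf_transition_ge (j0 : N) (D : set profile) (uj : profile -> R)
    (m : nat) (alpha : nat -> R) : (0 < m)%N ->
  (forall i, (1 <= i < m)%N -> (0 <= alpha i)%R) ->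
  (forall i, (1 <= i < m)%N -> lower_dependent D uj i (alpha i)) ->
  einf D uj * ((\prod_(1 <= i < m) alpha i)^-1)%:E <= einf (transition D m) uj.
Proof.
move=> m_gt0 alpha_ge0 lower; rewrite -{1}(transition1 j0 D) -prodfV.
apply: (@ereal_chain_ge _ (fun k => einf (transition D k) uj)) => // i im.
by rewrite invr_ge0 alpha_ge0.
Qed.

Lemma esup_transition_le (j0 : N) (D : set profile) (uj : profile -> R)
    (m : nat) (alpha : nat -> R) : (0 < m)%N ->
  (forall i, (1 <= i < m)%N -> (0 <= alpha i)%R) ->
  (forall i, (1 <= i < m)%N -> upper_dependent D uj i (alpha i)) ->
  esup (transition D m) uj <= (\prod_(1 <= i < m) alpha i)%:E * esup D uj.
Proof.
move=> m_gt0 alpha_ge0 upper; rewrite -[in X in _ <= X](transition1 j0 D).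
exact: (@ereal_chain_le _ (fun k => esup (transition D k) uj)).
Qed.

(* The slack e is spread over #|N| + 1 rather than #|N| players, so that no
   case distinction on N being empty is needed. *)
Lemma lb_sum_einf (v : N -> profile -> R) (X : set profile) c (r : N -> R) :
  (forall f : N -> profile, (forall j, X (f j)) -> c <= (\sum_j v j (f j))%:E) ->
  (forall j, einf X (v j) <= (r j)%:E) -> c <= (\sum_j r j)%:E.
Proof.
move=> family_lb einf_le; apply/lee_addgt0Pr => e e_gt0.
pose n : R := (#|N|.+1)%:R.
have n_gt0 : (0 < n)%R by rewrite ltr0n.
have /choice[f fP] : forall j, exists d, X d /\ (v j d < r j + e / n)%R.
  move=> j; have /einf_lt[d Xd vd] : einf X (v j) < (r j + e / n)%:E.
    by apply: le_lt_trans (einf_le j) _; rewrite lte_fin ltrDl divr_gt0.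
  by exists d.
apply: le_trans (family_lb f (fun j => (fP j).1)) _; rewrite -EFinD lee_fin.
apply: le_trans (ler_sum _ (fun j _ => ltW (fP j).2)) _.
rewrite big_split /= lerD2l sumr_const -mulr_natr mulrAC ler_pdivrMr //.
by rewrite ler_pM2l // ler_nat.
Qed.

Lemma ub_sum_esup (v : N -> profile -> R) (X : set profile) c (r : N -> R) :
  (forall f : N -> profile, (forall j, X (f j)) -> (\sum_j v j (f j))%:E <= c) ->
  (forall j, (r j)%:E <= esup X (v j)) -> (\sum_j r j)%:E <= c.
Proof.
move=> family_ub le_esup; rewrite -leeN2 -EFinN -sumrN.
apply: (@lb_sum_einf (fun j s => - v j s)%R X) => [f Xf | j].
- by rewrite sumrN EFinN leeN2; apply: family_ub.
- by rewrite einfN EFinN leeN2.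
Qed.

Lemma card_players_gt0 (u : N -> profile -> R) : 0 < opt u -> (0 < #|N|)%N.
Proof.
move=> opt_gt0; case: (pickP (@predT N)) => [j _|none].
  by apply/card_gt0P; exists j.
suff : opt u <= 0 by rewrite leNgt opt_gt0.
by apply: ub_esup => s _; rewrite /sw big_pred0.
Qed.

Section Welfare.
Variables (u : N -> profile -> R) (D : set profile) (beta : R) (j0 : N).
Hypotheses (beta_gt0 : (0 < beta)%R) (varied_u : forall j, varied u D (u j) beta).

Lemma einf_sw_le_sum (f : N -> profile) : (forall j, D (f j)) ->
  einf D (sw u) * (beta^-1)%:E <= (\sum_j u j (f j))%:E.
Proof.
move=> Df.
have [i _ i_min] := @arg_minP _ _ _ j0 xpredT (fun j => sw u (f j)) isT.
apply: (@le_trans _ _ (sw u (f i) / beta)%:E).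
  rewrite EFinM; apply: lee_wpmul2r; last exact: einf_lbound.
  by rewrite lee_fin invr_ge0 ltW.
rewrite lee_fin /sw mulr_suml; apply: ler_sum => j _.
exact: varied_u (Df j) (Df i) (i_min j isT).
Qed.

Lemma sum_le_esup_sw (f : N -> profile) : (forall j, D (f j)) ->
  (\sum_j u j (f j))%:E <= beta%:E * esup D (sw u).
Proof.
move=> Df.
have [i _ i_max] := @arg_maxP _ _ _ j0 xpredT (fun j => sw u (f j)) isT.
apply: (@le_trans _ _ (beta * sw u (f i))%:E); last first.
  rewrite EFinM; apply: lee_wpmul2l; last exact: esup_ubound.
  by rewrite lee_fin ltW.
rewrite lee_fin /sw mulr_sumr; apply: ler_sum => j _.
by rewrite mulrC -ler_pdivrMr //; apply: varied_u (Df i) (Df j) (i_max j isT).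
Qed.

Variables (m : nat) (alpha : nat -> R).
Hypotheses (m_gt0 : (0 < m)%N) (alpha_gt0 : forall i, (1 <= i < m)%N -> (0 < alpha i)%R).

Let P := (\prod_(1 <= i < m) alpha i)%R.

Let P_gt0 : (0 < P)%R.
Proof.
rewrite /P big_seq; apply: prodr_gt0 => i.
by rewrite mem_index_iota; apply: alpha_gt0.
Qed.

Let alpha_ge0 i (im : (1 <= i < m)%N) : (0 <= alpha i)%R.
Proof. exact/ltW/alpha_gt0. Qed.

Lemma einf_sw_transition_ge :
  (forall i, (1 <= i < m)%N -> forall j, lower_dependent D (u j) i (alpha i)) ->
  einf D (sw u) * ((P * beta)^-1)%:E <= einf (transition D m) (sw u).
Proof.
move=> lower; apply: lb_einf => t Tt.
rewrite mulrC invfM EFinM muleA lee_pdivrMr // -EFinM /sw mulr_suml.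
apply: (@lb_sum_einf u D) => [f Df | j]; first exact: einf_sw_le_sum.
rewrite EFinM -lee_pdivrMr // /P.
apply: le_trans (einf_transition_ge j0 m_gt0 alpha_ge0 (fun i im => lower i im j)) _.
exact: einf_lbound.
Qed.

Lemma esup_sw_transition_le :
  (forall i, (1 <= i < m)%N -> forall j, upper_dependent D (u j) i (alpha i)) ->
  esup (transition D m) (sw u) <= (P * beta)%:E * esup D (sw u).
Proof.
move=> upper; apply: ub_esup => t Tt.
rewrite EFinM -muleA -lee_pdivrMl // -EFinM /sw mulr_sumr.
apply: (@ub_sum_esup u D) => [f Df | j]; first exact: sum_le_esup_sw.
rewrite EFinM lee_pdivrMl // /P.
apply: le_trans (esup_transition_le j0 m_gt0 alpha_ge0 (fun i im => upper i im j)).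
exact: esup_ubound.
Qed.

End Welfare.
End Game.

Theorem proposition2 (R : realType) (N : finType) (A : N -> Type)
    (u : N -> profile A -> R) (D : set (profile A))
    (m : nat) (beta : R) (alpha : nat -> R) :
  (0 < opt u)%E -> (opt u < +oo)%E ->
  (1 <= m)%N -> 1 <= beta ->
  (forall i, (1 <= i < m)%N -> 1 <= alpha i) ->
  (forall j, varied u D (u j) beta) ->
  ((forall i, (1 <= i < m)%N -> forall j, lower_dependent D (u j) i (alpha i)) ->
     (PoA u D * (((\prod_(1 <= i < m) alpha i) * beta)^-1)%:E <= PoTA u D m)%E)
  /\
  ((forall i, (1 <= i < m)%N -> forall j, upper_dependent D (u j) i (alpha i)) ->
     (PoTS u D m <= ((\prod_(1 <= i < m) alpha i) * beta)%:E * PoS u D)%E).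
Proof.
move=> opt_gt0 _ m_gt0 beta_ge1 alpha_ge1 varied_u.
have /card_gt0P[j0 _] := card_players_gt0 opt_gt0.
have beta_gt0 : 0 < beta := lt_le_trans ltr01 beta_ge1.
have alpha_gt0 i (im : (1 <= i < m)%N) : 0 < alpha i :=
  lt_le_trans ltr01 (alpha_ge1 i im).
have inv_opt_ge0 : (0 <= ((fine (opt u))^-1)%:E)%E.
  by rewrite lee_fin invr_ge0 fine_ge0 // ltW.
split => [lower | upper].
- rewrite /PoA /PoTA /ratio muleAC; apply: lee_wpmul2r => //.
  exact (einf_sw_transition_ge j0 beta_gt0 varied_u m_gt0 alpha_gt0 lower).
- rewrite /PoTS /PoS /ratio muleA; apply: lee_wpmul2r => //.
  exact (esup_sw_transition_le j0 beta_gt0 varied_u m_gt0 alpha_gt0 upper).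
Qed.
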